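(* Let $\mathcal{H}\in\mathbb{C}^{[n_1,\ldots,n_m]}$. Then $\mathcal{H}$ is HSOS if and only if $\mathfrak{m}(\mathcal{H})$ is positive semidefinite.
   Context: $\mathbb{C}^{[n_1,\ldots,n_m]}$ is the real vector space of tensors $\mathcal{H}\in\mathbb{C}^{n_1\times\cdots\times n_m\times n_1\times\cdots\times n_m}$ with $\mathcal{H}_{i_1\ldots i_m j_1\ldots j_m}=\overline{\mathcal{H}_{j_1\ldots j_m i_1\ldots i_m}}$. For $x=(x_1,\ldots,x_m)$, $x_i\in\mathbb{C}^{n_i}$, $\mathcal{H}(x,\overline{x}):=\langle\mathcal{H},x_1\otimes\cdots\otimes x_m\otimes\overline{x_1}\otimes\cdots\otimes\overline{x_m}\rangle$ with $\langle\mathcal{A},\mathcal{B}\rangle=\sum\mathcal{A}_{\cdot}\overline{\mathcal{B}_{\cdot}}$. $\mathcal{H}$ is HSOS (Hermitian sum of squares) if $\mathcal{H}(x,\overline{x})=|p_1(x)|^2+\cdots+|p_k(x)|^2$ for some complex polynomials $p_i$ in $x$ (not involving $\overline{x}$). The Hermitian flattening $\mathfrak{m}(\mathcal{H})$ is the $N\times N$ Hermitian matrix ($N=n_1\cdots n_m$) with $(\mathfrak{m}(\mathcal{H}))_{IJ}=\mathcal{H}_{i_1\ldots i_mj_1\ldots j_m}$ for $I=(i_1,\ldots,i_m)$, $J=(j_1,\ldots,j_m)$ in lexicographic order; equivalently $\mathfrak{m}$ is linear with $\mathfrak{m}(v_1\otimes\cdots\otimes v_m\otimes\overline{v_1}\otimes\cdots\otimes\overline{v_m})=(v_1v_1^*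 )\boxtimes\cdots\boxtimes(v_mv_m^* )$, $\boxtimes$ the Kronecker product. *)

From HB Require Import structures.
From mathcomp Require Import all_boot all_order all_algebra.
From mathcomp Require Import complex.
From mathcomp Require Import mpoly.
Set Implicit Arguments. Unset Strict Implicit. Unset Printing Implicit Defensive.
Import Order.TTheory GRing.Theory Num.Theory.
Local Open Scope ring_scope.

(* The complex field is modelled as R[i] for a real closed field R
   (R = the reals gives the usual complex numbers). *)

Definition mindex (m : nat) (n : 'I_m -> nat) : finType :=
  {dffun forall k : 'I_m, 'I_(n k)}.

(* A tensor in C^{n_1 x ... x n_m x n_1 x ... x n_m}: entry H I J is
   H_{i_1...i_m j_1...j_m}. *)
Definition tensor (R : rcfType) (m : nat) (n : 'I_m -> nat) :=
  mindex n -> mindex n -> R[i].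

Definition hermitian_tensor (R : rcfType) m (n : 'I_m -> nat) (H : tensor R n) :=
  forall I J : mindex n, H I J = (H J I)^*.

Definition point (R : rcfType) m (n : 'I_m -> nat) :=
  forall k : 'I_m, 'I_(n k) -> R[i].

Definition rank_one (R : rcfType) m (n : 'I_m -> nat) (x : point R n) : tensor R n :=
  fun I J => (\prod_(k < m) x k (I k)) * (\prod_(k < m) (x k (J k))^*).

Definition tensor_inner (R : rcfType) m (n : 'I_m -> nat) (A B : tensor R n) : R[i] :=
  \sum_(I : mindex n) \sum_(J : mindex n) A I J * (B I J)^*.

Definition tform (R : rcfType) m (n : 'I_m -> nat) (H : tensor R n) (x : point R n) :=
  tensor_inner H (rank_one x).

(* The variables of x: pairs (k, i) with i < n_k, numbered via enum_rank. *)
Definition var_index m (n : 'I_m -> nat) : finType := {k : 'I_m & 'I_(n k)}.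
Definition nvars m (n : 'I_m -> nat) : nat := #|var_index n|.

Definition coords (R : rcfType) m (n : 'I_m -> nat) (x : point R n) :
  'I_(nvars n) -> R[i] :=
  fun j => let v := enum_val j in x (tag v) (tagged v).

Definition HSOS (R : rcfType) m (n : 'I_m -> nat) (H : tensor R n) :=
  exists (s : nat) (p : 'I_s -> {mpoly R[i][nvars n]}),
    forall x : point R n,
      tform H x = \sum_(t < s) `|(p t).@[coords x]| ^+ 2.

Definition Nflat m (n : 'I_m -> nat) : nat := (\prod_(k < m) n k)%N.
Definition lexrank m (n : 'I_m -> nat) (I : mindex n) : nat :=
  (\sum_(k < m) I k * \prod_(l < m | (k < l)%N) n l)%N.

(* Hermitian flattening: (m(H))_{rank I, rank J} = H_{I J}.  Since lexrank is
   a bijection onto [0, N), each entry is a sum with exactly one term. *)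
Definition hflat (R : rcfType) m (n : 'I_m -> nat) (H : tensor R n) :
  'M[R[i]]_(Nflat n) :=
  \matrix_(r, c) \sum_(I : mindex n | lexrank I == r)
                   \sum_(J : mindex n | lexrank J == c) H I J.

Definition psdmx (R : rcfType) (N : nat) (M : 'M[R[i]]_N) :=
  forall v : 'cV[R[i]]_N, 0 <= ((map_mx conjc v)^T *m M *m v) 0 0.

From mathcomp Require Import all_boot all_order all_algebra.
From mathcomp Require Import complex.
From mathcomp Require Import mpoly.
From mathcomp Require Import zify ring.
Set Implicit Arguments. Unset Strict Implicit. Unset Printing Implicit Defensive.
Import Order.TTheory GRing.Theory Num.Theory.
Local Open Scope ring_scope.

(* Both directions factor the flattening as a Gram matrix m(H) = Q^* Q.  When m(H)
   is positive semidefinite the spectral theorem provides Q, and the rows of Q,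
   read as linear combinations of the monomials x_1(i_1) ... x_m(i_m), are the
   polynomials of an HSOS decomposition.  Conversely, the Kronecker substitution
   x_k(i) = z^(i n_(k+1) ... n_m) sends that monomial to z^(lexrank I), so an HSOS
   identity becomes  sum_(a,b) m(H)_ab conj(z)^a z^b = sum_t |q_t(z)|^2  with
   univariate q_t.  A polynomial in conj(z) and z that vanishes on all of C has zero
   coefficients, hence m(H)_ab = sum_t conj(q_t,a) q_t,b. *)

Section SesquilinearPolynomials.
Variable C : numClosedFieldType.

Lemma poly_eq0_inj_roots (f : nat -> C) (p : {poly C}) :
  injective f -> (forall j, p.[f j] = 0) -> p = 0.
Proof.
move=> f_inj pf0; apply: (@roots_geq_poly_eq0 _ p [seq f j | j <- iota 0 (size p)]).
- by apply/allP => _ /mapP[j _ ->]; apply/eqP/pf0.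
- by rewrite map_inj_uniq ?iota_uniq.
- by rewrite size_map size_iota.
Qed.

Definition cayley (j : nat) : C := (1 + 'i * j%:R) / (1 - 'i * j%:R).

Lemma cayley_factors_neq0 j :
  (1 - 'i * j%:R != 0 :> C) && (1 + 'i * j%:R != 0 :> C).
Proof.
rewrite -negb_or -mulf_eq0.
have -> : (1 - 'i * j%:R) * (1 + 'i * j%:R) = 1 - 'i ^+ 2 * j%:R ^+ 2 :> C by ring.
by rewrite sqrCi mulN1r opprK -natrX addrC natr1 pnatr_eq0.
Qed.

Lemma cayley_neq0 j : cayley j != 0.
Proof.
by have /andP[den0 num0] := cayley_factors_neq0 j; rewrite mulf_neq0 ?invr_eq0.
Qed.

Lemma conj_cayley j : (cayley j)^* = (cayley j)^-1.
Proof.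
rewrite /cayley rmorphM /= fmorphV /= rmorphD rmorphB /= rmorphM /=.
rewrite conjCi conjC_nat rmorph1.
by rewrite invfM invrK !mulNr opprK mulrC.
Qed.

Lemma cayley_inj : injective cayley.
Proof.
move=> a b; have /andP[da _] := cayley_factors_neq0 a.
have /andP[db _] := cayley_factors_neq0 b.
move/eqP; rewrite eqr_div // => /eqP eq_ab.
have : 'i * 2%:R * (a%:R - b%:R) = 0 :> C.
  by rewrite -[LHS]subr0 -(subrr ((1 + 'i * a%:R) * (1 - 'i * b%:R))) {2}eq_ab; ring.
by move/eqP; rewrite !mulf_eq0 subr_eq0 eqr_nat pnatr_eq0 (negbTE (neq0Ci C)) => /eqP.
Qed.

(* For [z = s u] with [u] a Cayley point, [conj z = s / u], so [u ^+ D] times the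
   hypothesis is a polynomial in [u] whose coefficients are the sums below. *)
Lemma sesquipoly_diag_eq0 (D : nat) (c : nat -> nat -> C) :
  (forall z : C, \sum_(a < D) \sum_(b < D) c a b * z^* ^+ a * z ^+ b = 0) ->
  forall (e s : nat), \sum_(a < D) \sum_(b < D)
    c a b * s%:R ^+ (a + b) * (e == D + b - a)%N%:R = 0.
Proof.
move=> c0 e s.
pose P : {poly C} :=
  \sum_(a < D) \sum_(b < D) (c a b * s%:R ^+ (a + b)) *: 'X^(D + b - a).
have P0 : P = 0.
  apply: (poly_eq0_inj_roots cayley_inj) => j; rewrite horner_sum.
  transitivity (cayley j ^+ D * \sum_(a < D) \sum_(b < D)
     c a b * (s%:R * cayley j)^* ^+ a * (s%:R * cayley j) ^+ b);
    last by rewrite c0 mulr0.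
  rewrite mulr_sumr; apply: eq_bigr => a _; rewrite horner_sum mulr_sumr.
  apply: eq_bigr => b _; move: (cayley j) (cayley_neq0 j) (conj_cayley j) => u u0 uc.
  rewrite hornerZ hornerXn rmorphM /= conjC_nat uc !exprMn exprVn.
  have -> : (D + b - a = (D - a) + b)%N by have := ltn_ord a; lia.
  have -> : u ^+ D = u ^+ (D - a) * u ^+ a by rewrite -exprD subnK // ltnW.
  by rewrite exprD exprD; field; rewrite expf_neq0.
rewrite -[RHS](coef0 C e) -P0 coef_sum; apply: eq_bigr => a _; rewrite coef_sum.
by apply: eq_bigr => b _; rewrite coefZ coefXn.
Qed.

Lemma sesquipoly_eq0 (D : nat) (c : nat -> nat -> C) :
  (forall z : C, \sum_(a < D) \sum_(b < D) c a b * z^* ^+ a * z ^+ b = 0) ->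
  forall a0 b0, (a0 < D)%N -> (b0 < D)%N -> c a0 b0 = 0.
Proof.
move=> c0 a0 b0 a0D b0D; set e := (D + b0 - a0)%N.
have natr_inj : injective (fun s : nat => s%:R : C).
  by move=> x y /eqP; rewrite eqr_nat => /eqP.
pose Q : {poly C} :=
  \sum_(a < D) \sum_(b < D) (c a b * (e == D + b - a)%N%:R) *: 'X^(a + b).
have Q0 : Q = 0.
  apply: (poly_eq0_inj_roots natr_inj) => s.
  rewrite -(sesquipoly_diag_eq0 c0 e s) horner_sum; apply: eq_bigr => a _.
  by rewrite horner_sum; apply: eq_bigr => b _; rewrite hornerZ hornerXn mulrAC.
have : Q`_(a0 + b0) = 0 by rewrite Q0 coef0.
rewrite coef_sum (eq_bigr _ (fun a _ => coef_sum _ _ _ _)) pair_bigA /=.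
rewrite (bigD1 (Ordinal a0D, Ordinal b0D)) //= big1 ?addr0 => [|[a b] /= ne].
  by rewrite coefZ coefXn /e !eqxx !mulr1.
rewrite coefZ coefXn -mulrA -natrM mulnb.
suff -> : ((e == D + b - a) && (a0 + b0 == a + b))%N = false by rewrite mulr0.
(* [D + b - a] and [a + b] determine [(a, b)]. *)
apply: contraNF ne => /andP[/eqP eq1 /eqP eq2].
rewrite xpair_eqE -!val_eqE /=.
by apply/andP; split; apply/eqP; move: eq1; rewrite /e; lia.
Qed.

Lemma sqr_norm_sum (I : finType) (u : I -> C) :
  `|\sum_i u i| ^+ 2 = \sum_i \sum_j (u i)^* * u j.
Proof.
rewrite normCKC rmorph_sum mulr_suml; apply: eq_bigr => i _.
by rewrite mulr_sumr.
Qed.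

Lemma sqr_norm_horner (D : nat) (q : {poly C}) z : (size q <= D)%N ->
  `|q.[z]| ^+ 2 = \sum_(a < D) \sum_(b < D) (q`_a)^* * q`_b * z^* ^+ a * z ^+ b.
Proof.
move=> qD; rewrite (horner_coef_wide z qD) sqr_norm_sum; apply: eq_bigr => a _.
by apply: eq_bigr => b _; rewrite rmorphM rmorphXn /=; ring.
Qed.

End SesquilinearPolynomials.

Section KroneckerSubstitution.
Variables (A : comNzRingType) (k : nat) (w : 'I_k -> nat).

Definition kronecker_poly (p : {mpoly A[k]}) : {poly A} :=
  \sum_(mm <- msupp p) p@_mm *: 'X^(\sum_i w i * mm i).

Lemma meval_kronecker (p : {mpoly A[k]}) z :
  p.@[fun i => z ^+ w i] = (kronecker_poly p).[z].
Proof.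
rewrite mevalE horner_sum; apply: eq_bigr => mm _.
rewrite hornerZ hornerXn -prodrXr; congr (_ * _).
by apply: eq_bigr => i _; rewrite exprM.
Qed.

End KroneckerSubstitution.

Section GramMatrices.
Variable R : rcfType.
Local Open Scope sesquilinear_scope.

Lemma psdmx_gram s N (Q : 'M[R[i]]_(s, N)) : psdmx ((map_mx conjc Q)^T *m Q).
Proof.
move=> v; rewrite mulmxA -trmx_mul -map_mxM -mulmxA mxE.
by apply: sumr_ge0 => t _; rewrite !mxE mulrC mul_conjC_ge0.
Qed.

Lemma hermitian_psdmx_gram N (M : 'M[R[i]]_N) : M \is hermsymmx -> psdmx M ->
  exists Q : 'M[R[i]]_N, M = (map_mx conjc Q)^T *m Q.
Proof.
move=> Mherm Mpsd; have /orthomx_spectralP := hermitian_normalmx Mherm.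
set P := spectralmx M; set d := spectral_diag M.
have Pu : P \is unitarymx := spectral_unitarymx M.
rewrite (invmx_unitary Pu) => ME.
have PPt : P *m P^t* = 1%:M by apply/unitarymxP.
have d_ge0 k : 0 <= d 0 k.
  have := Mpsd (P^t* *m delta_mx k 0).
  rewrite map_mxM trmx_mul map_delta_mx trmx_delta map_trmx trmxCK ME.
  rewrite !mulmxA -(mulmxA _ P) PPt mulmx1 -(mulmxA _ P) PPt mulmx1.
  by rewrite -rowE row_diag_mx -scalemxAl mul_delta_mx !mxE !eqxx mulr1.
pose s := \row_k sqrtC (d 0 k); exists (diag_mx s *m P).
have s_real : s ^ conjc = s.
  by apply/rowP => k; rewrite !mxE; apply: geC0_conj; rewrite sqrtC_ge0.
have ss : diag_mx s *m diag_mx s = diag_mx d.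
  by rewrite mulmx_diag; congr diag_mx; apply/rowP => k; rewrite !mxE -expr2 sqrtCK.
rewrite map_mxM map_diag_mx s_real trmx_mul tr_diag_mx mulmxA.
by rewrite -[_ *m diag_mx s *m diag_mx s]mulmxA ss map_trmx ME.
Qed.

End GramMatrices.

Section LexicographicRank.
Variables (m : nat) (n : 'I_m -> nat).

Definition radix_from (j : nat) : nat := \prod_(l < m | (j <= l)%N) n l.

Definition lexrank_from (I : mindex n) (j : nat) : nat :=
  \sum_(k < m | (j <= k)%N) I k * radix_from k.+1.

Lemma radix_fromS j (jm : (j < m)%N) :
  radix_from j = (n (Ordinal jm) * radix_from j.+1)%N.
Proof.
rewrite /radix_from (bigD1 (Ordinal jm)) //=; congr (_ * _)%N.
by apply: eq_bigl => k; rewrite ltn_neqAle andbC eq_sym.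
Qed.

Lemma lexrank_fromS I j (jm : (j < m)%N) :
  lexrank_from I j = (I (Ordinal jm) * radix_from j.+1 + lexrank_from I j.+1)%N.
Proof.
rewrite /lexrank_from (bigD1 (Ordinal jm)) //=; congr (_ + _)%N.
by apply: eq_bigl => k; rewrite ltn_neqAle andbC eq_sym.
Qed.

Lemma lexrank_from_lt I j : (lexrank_from I j < radix_from j)%N.
Proof.
have [d] : {d | m - j = d}%N by exists (m - j)%N.
elim: d j => [|d IHd] j jd.
  have none : (fun k : 'I_m => j <= k)%N =1 xpred0 by move=> k; have := ltn_ord k; lia.
  by rewrite /lexrank_from /radix_from !big_pred0.
have jm : (j < m)%N by lia.
rewrite (lexrank_fromS I jm) (radix_fromS jm).
have := leq_mul (ltn_ord (I (Ordinal jm))) (leqnn (radix_from j.+1)).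
by have := IHd j.+1 ltac:(lia); rewrite mulSn; lia.
Qed.

Lemma lexrank_from0 I : lexrank_from I 0 = lexrank I.
Proof. exact: eq_bigl. Qed.

Lemma radix_from0 : radix_from 0 = Nflat n.
Proof. exact: eq_bigl. Qed.

Lemma lexrank_lt (I : mindex n) : (lexrank I < Nflat n)%N.
Proof. by rewrite -lexrank_from0 -radix_from0 lexrank_from_lt. Qed.

Lemma lexrank_fromS_inj I J j (jm : (j < m)%N) :
  lexrank_from I j = lexrank_from J j ->
  I (Ordinal jm) = J (Ordinal jm) /\ lexrank_from I j.+1 = lexrank_from J j.+1.
Proof.
rewrite !(lexrank_fromS _ jm) => eqIJ.
have ltI := lexrank_from_lt I j.+1; have ltJ := lexrank_from_lt J j.+1.
have radix_gt0 : (0 < radix_from j.+1)%N by lia.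
have eq_digit : nat_of_ord (I (Ordinal jm)) = J (Ordinal jm).
  have := congr1 (divn^~ (radix_from j.+1)) eqIJ.
  by rewrite /= !divnMDl // !divn_small // !addn0.
by split; [apply: val_inj | move: eqIJ; rewrite eq_digit => /addnI].
Qed.

Lemma lexrank_inj : injective (@lexrank m n).
Proof.
move=> I J eqIJ.
suff agree j : (j <= m)%N ->
    lexrank_from I j = lexrank_from J j /\ forall k : 'I_m, (k < j)%N -> I k = J k.
  by apply/ffunP => k; apply: (agree m (leqnn m)).2 k (ltn_ord k).
elim: j => [|j IHj] jm; first by rewrite !lexrank_from0.
have [eq_j eq_prefix] := IHj (ltnW jm).
have [eq_digit eq_suffix] := lexrank_fromS_inj jm eq_j.
split=> // k; rewrite ltnS leq_eqVlt => /orP[/eqP kj | ]; last exact: eq_prefix.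
by have -> : k = Ordinal jm by apply: val_inj.
Qed.

End LexicographicRank.

Lemma partition_big_ord (I : finType) (V : nmodType) (D : nat) (f : I -> nat)
    (g : I -> nat -> V) :
  (forall i, f i < D)%N ->
  \sum_i g i (f i) = \sum_(a < D) \sum_(i | f i == a) g i a.
Proof.
move=> fD; rewrite (partition_big (fun i => Ordinal (fD i)) xpredT) //=.
by apply: eq_bigr => a _; apply: eq_big => // i /eqP <-.
Qed.

Section HermitianFlattening.
Variables (R : rcfType) (m : nat) (n : 'I_m -> nat).
Local Notation C := R[i].
Local Notation N := (Nflat n).

Definition flat_coef (H : tensor R n) (a b : nat) : C :=
  \sum_(I : mindex n | lexrank I == a) \sum_(J : mindex n | lexrank J == b) H I J.

Lemma hflatE (H : tensor R n) (r c : 'I_N) : hflat H r c = flat_coef H r c.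
Proof. by rewrite mxE. Qed.

Lemma flat_coef_lexrank (H : tensor R n) I J :
  flat_coef H (lexrank I) (lexrank J) = H I J.
Proof.
have rank_eq (K K' : mindex n) : (lexrank K' == lexrank K) = (K' == K).
  by rewrite (inj_eq (@lexrank_inj _ n)).
rewrite /flat_coef (big_pred1 I) => [|I']; last exact: rank_eq.
by rewrite (big_pred1 J) // => J'; apply: rank_eq.
Qed.

Lemma hflat_hermitian (H : tensor R n) : hermitian_tensor H -> hflat H \is hermsymmx.
Proof.
move=> hH; apply/is_hermitianmxP; rewrite expr0 scale1r.
apply/matrixP => r c; rewrite !mxE rmorph_sum exchange_big /=.
by apply: eq_bigr => J _; rewrite rmorph_sum; apply: eq_bigr => I _; rewrite hH.
Qed.

Definition monomial (x : point R n) (I : mindex n) : C := \prod_(k < m) x k (I k).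

Lemma tformE (H : tensor R n) x :
  tform H x = \sum_I \sum_J H I J * (monomial x I)^* * monomial x J.
Proof.
apply: eq_bigr => I _; apply: eq_bigr => J _; rewrite /rank_one.
by rewrite -rmorph_prod rmorphM /= conjCK mulrA.
Qed.

Definition lexord (I : mindex n) : 'I_N := Ordinal (lexrank_lt I).

Definition var_of (I : mindex n) (k : 'I_m) : 'I_(nvars n) :=
  enum_rank (Tagged (fun k => 'I_(n k)) (I k) : var_index n).

Lemma meval_monomial (x : point R n) I :
  (\prod_(k < m) 'X_(var_of I k) : {mpoly C[nvars n]}).@[coords x] = monomial x I.
Proof.
rewrite (big_morph _ (mevalM _) (meval1 _)); apply: eq_bigr => k _.
by rewrite mevalXU /coords /var_of enum_rankK.
Qed.

Lemma gram_HSOS (H : tensor R n) s (Q : 'M[C]_(s, N)) :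
  hflat H = (map_mx conjc Q)^T *m Q -> HSOS H.
Proof.
move=> HQ; exists s, (fun t =>
  \sum_J Q t (lexord J) *: \prod_(k < m) 'X_(var_of J k)) => x.
rewrite tformE; under [RHS]eq_bigr => t _ do
  rewrite (big_morph _ (mevalD _) (meval0 _)) sqr_norm_sum.
rewrite [RHS]exchange_big; apply: eq_bigr => I _.
rewrite [RHS]exchange_big; apply: eq_bigr => J _.
rewrite -flat_coef_lexrank -(hflatE H (lexord I) (lexord J)) HQ mxE !mulr_suml.
apply: eq_bigr => t _; rewrite !mevalZ !meval_monomial !mxE rmorphM /=; ring.
Qed.

Definition kronecker_point (z : C) : point R n :=
  fun k i => z ^+ (i * radix_from n k.+1).

Definition kronecker_weight (v : 'I_(nvars n)) : nat :=
  tagged (enum_val v) * radix_from n (tag (enum_val v)).+1.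

Lemma coords_kronecker z :
  coords (kronecker_point z) = fun v => z ^+ kronecker_weight v.
Proof. by []. Qed.

Lemma monomial_kronecker z I : monomial (kronecker_point z) I = z ^+ lexrank I.
Proof. exact: prodrXr. Qed.

Lemma tform_kronecker (H : tensor R n) D z : (N <= D)%N ->
  tform H (kronecker_point z) =
  \sum_(a < D) \sum_(b < D) flat_coef H a b * z^* ^+ a * z ^+ b.
Proof.
move=> ND; have rankD (I : mindex n) : (lexrank I < D)%N.
  by apply: leq_trans (lexrank_lt I) ND.
rewrite tformE; under eq_bigr => I _ do under eq_bigr => J _ do
  rewrite !monomial_kronecker rmorphXn.
rewrite (partition_big_ord (fun I a => \sum_J H I J * z^* ^+ a * z ^+ lexrank J) rankD).
apply: eq_bigr => a _; rewrite exchange_big /=.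
rewrite (partition_big_ord (fun J b =>
  \sum_(I | lexrank I == a) H I J * z^* ^+ a * z ^+ b) rankD).
apply: eq_bigr => b _; rewrite !mulr_suml exchange_big /=.
by apply: eq_bigr => I _; rewrite !mulr_suml.
Qed.

Lemma HSOS_gram (H : tensor R n) :
  HSOS H -> exists s (Q : 'M[C]_(s, N)), hflat H = (map_mx conjc Q)^T *m Q.
Proof.
move=> [s [p Hp]]; pose q t := kronecker_poly kronecker_weight (p t).
pose D := maxn N (\max_(t < s) size (q t)).
have ND : (N <= D)%N by rewrite leq_maxl.
have qD t : (size (q t) <= D)%N by rewrite leq_max (leq_bigmax t) orbT.
have flat_coef_gram : forall a b, (a < D)%N -> (b < D)%N ->
    flat_coef H a b - \sum_(t < s) ((q t)`_a)^* * (q t)`_b = 0.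
  apply: sesquipoly_eq0 => z.
  have := Hp (kronecker_point z).
  rewrite (tform_kronecker H z ND) coords_kronecker => tform_z.
  under eq_bigr => a _ do under eq_bigr => b _ do rewrite mulrBl mulrBl.
  under eq_bigr => a _ do rewrite sumrB.
  apply/eqP; rewrite sumrB tform_z subr_eq0; apply/eqP.
  under eq_bigr => t _ do rewrite meval_kronecker (sqr_norm_horner z (qD t)).
  rewrite exchange_big; apply: eq_bigr => a _; rewrite exchange_big.
  by apply: eq_bigr => b _; rewrite !mulr_suml.
exists s, (\matrix_(t, c) (q t)`_c); apply/matrixP => r c.
rewrite hflatE (subr0_eq (flat_coef_gram r c _ _)) ?(leq_trans _ ND) // !mxE.
by apply: eq_bigr => t _; rewrite !mxE.
Qed.

End HermitianFlattening.

Theorem proposition5p7 (R : rcfType) (m : nat) (n : 'I_m -> nat)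
  (H : tensor R n) (hH : hermitian_tensor H) :
  HSOS H <-> psdmx (hflat H).
Proof.
split=> [/HSOS_gram [s [Q ->]] | psdH]; first exact: psdmx_gram.
have [Q HQ] := hermitian_psdmx_gram (hflat_hermitian hH) psdH.
exact: gram_HSOS HQ.
Qed.
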